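(* Let $k,n$ be positive integers and let $$C_{k,n,1}=\inf_{v}\ \sup_{0\neq f\in\ell^2(\mathbb{Z})}\frac{\|\nabla^{k}(v\ast f)\|_{\ell^2(\mathbb{Z})}}{\|f\|_{\ell^2(\mathbb{Z})}},$$ where the infimum is over all $v:\{-n,\dots,n\}\to\mathbb{R}$ with $v(j)=v(-j)$ for all $j$ and $\sum_{j=-n}^{n}v(j)=1$. Then for every $u:\{-n,\dots,n\}\to\mathbb{C}$ with $\sum_{j=-n}^{n}u(j)=1$, $$\sup_{0\neq f\in\ell^2(\mathbb{Z})}\frac{\|\nabla^{k}(u\ast f)\|_{\ell^2(\mathbb{Z})}}{\|f\|_{\ell^2(\mathbb{Z})}}\ \ge\ C_{k,n,1}.$$
   Context: Functions on $\{-n,\dots,n\}$ are regarded as functions on $\mathbb{Z}$ vanishing outside it; $\nabla g(k)=g(k+1)-g(k)$, $\nabla^{k}=\nabla(\nabla^{k-1})$; $(u\ast f)(m)=\sum_ju(j)f(m-j)$. Suprema are over nonzero complex-valued $f\in\ell^2(\mathbb{Z})$. *)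

From Stdlib Require Import Reals ZArith List.
From Coquelicot Require Import Coquelicot.
Import ListNotations.
Open Scope R_scope.

Definition zrange (n : nat) : list Z :=
  map (fun i => (Z.of_nat i - Z.of_nat n)%Z) (seq 0 (2 * n + 1)).

Definition sumZC (n : nat) (g : Z -> C) : C :=
  fold_right (fun j acc => Cplus (g j) acc) (RtoC 0) (zrange n).
Definition sumZR (n : nat) (g : Z -> R) : R :=
  fold_right (fun j acc => g j + acc) 0 (zrange n).

Definition supported_in {A : Type} (zero : A) (n : nat) (g : Z -> A) : Prop :=
  forall j : Z, (Z.of_nat n < Z.abs j)%Z -> g j = zero.

(* two-sided series  sum_{m in Z} |f m|^2  (folded as m >= 0 and m <= -1) *)
Definition sq_terms (f : Z -> C) (m : nat) : R :=
  (Cmod (f (Z.of_nat m)))^2 + (Cmod (f (- Z.of_nat m - 1)%Z))^2.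

Definition in_l2 (f : Z -> C) : Prop := ex_series (sq_terms f).
Definition l2_normsq (f : Z -> C) : R := Series (sq_terms f).
Definition l2_norm (f : Z -> C) : R := sqrt (l2_normsq f).

Definition nabla (g : Z -> C) : Z -> C := fun m => Cminus (g (m + 1)%Z) (g m).
Definition nabla_iter (k : nat) (g : Z -> C) : Z -> C := Nat.iter k nabla g.

Definition conv (n : nat) (u : Z -> C) (f : Z -> C) : Z -> C :=
  fun m => sumZC n (fun j => Cmult (u j) (f (m - j)%Z)).

Definition opnorm (k n : nat) (u : Z -> C) : Rbar :=
  Lub_Rbar (fun r => exists f : Z -> C,
    in_l2 f /\ f <> (fun _ => RtoC 0) /\
    r = l2_norm (nabla_iter k (conv n u f)) / l2_norm f).

Definition Cknl (k n : nat) : Rbar :=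
  Glb_Rbar (fun r => exists v : Z -> R,
    supported_in 0 n v /\ (forall j, v j = v (- j)%Z) /\ sumZR n v = 1 /\
    opnorm k n (fun j => RtoC (v j)) = Finite r).

(* If ‖∇^k(u∗f)‖ ≤ M‖f‖ for every f ∈ ℓ², the same bound holds for the kernels
   conj u and u(-·): conjugating, resp. reflecting, f is an ℓ²-isometry that
   intertwines the operators up to conjugation, resp. a sign and a reflection
   of the output.  The operator is linear in the kernel and the squared ℓ² norm
   is convex, so the bound passes to the average
   v = (u + conj u + u(-·) + conj u(-·)) / 4 = Re (u + u(-·)) / 2,
   which is real, even and of sum 1.  Hence C_{k,n,1} ≤ opnorm v ≤ opnorm u. *)

From Stdlib Require Import Reals ZArith List Lia Lra FunctionalExtensionality.
From Coquelicot Require Import Coquelicot.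
Open Scope R_scope.

Lemma sumZC_plus n (g h : Z -> C) :
  sumZC n (fun j => (g j + h j)%C) = (sumZC n g + sumZC n h)%C.
Proof.
  unfold sumZC. induction (zrange n) as [|a l IH]; cbn [fold_right].
  - ring.
  - rewrite IH. ring.
Qed.

Lemma sumZC_scal n (c : C) (g : Z -> C) :
  sumZC n (fun j => (c * g j)%C) = (c * sumZC n g)%C.
Proof.
  unfold sumZC. induction (zrange n) as [|a l IH]; cbn [fold_right].
  - ring.
  - rewrite IH. ring.
Qed.

Lemma sumZC_conj n (g : Z -> C) :
  sumZC n (fun j => Cconj (g j)) = Cconj (sumZC n g).
Proof.
  unfold sumZC. induction (zrange n) as [|a l IH]; cbn [fold_right].
  - apply injective_projections; simpl; ring.
  - rewrite IH, Cplus_conj. reflexivity.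
Qed.

Lemma Re_sumZC n (g : Z -> C) : Re (sumZC n g) = sumZR n (fun j => Re (g j)).
Proof.
  unfold sumZC, sumZR. induction (zrange n) as [|a l IH]; cbn [fold_right].
  - reflexivity.
  - rewrite <- IH. reflexivity.
Qed.

Lemma zrange_S n :
  zrange (S n) = (- Z.of_nat (S n))%Z :: zrange n ++ (Z.of_nat (S n) :: nil).
Proof.
  unfold zrange.
  replace (2 * S n + 1)%nat with (S (S (2 * n + 1))) by lia.
  rewrite <- cons_seq, seq_S, <- seq_shift, map_cons, map_app, map_map.
  do 2 f_equal.
  - apply map_ext. intros. lia.
  - cbn [map]. f_equal. lia.
Qed.

Lemma sumZC_S n (g : Z -> C) :
  sumZC (S n) g = (g (- Z.of_nat (S n))%Z + sumZC n g + g (Z.of_nat (S n)))%C.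
Proof.
  unfold sumZC. rewrite zrange_S. cbn [fold_right]. rewrite fold_right_app.
  cbn [fold_right]. rewrite <- Cplus_assoc. f_equal.
  induction (zrange n) as [|a l IH]; cbn [fold_right].
  - ring.
  - rewrite IH. ring.
Qed.

Lemma sumZC_opp_index n (g : Z -> C) : sumZC n (fun j => g (- j)%Z) = sumZC n g.
Proof.
  induction n as [|n IH]; [reflexivity|].
  rewrite !sumZC_S, IH, Z.opp_involutive. ring.
Qed.

Lemma conv_kernel_plus n (a b f : Z -> C) m :
  conv n (fun j => (a j + b j)%C) f m = (conv n a f m + conv n b f m)%C.
Proof.
  unfold conv. rewrite <- sumZC_plus. f_equal.
  apply functional_extensionality. intros j. ring.
Qed.

Lemma conv_kernel_scal n (c : C) (a f : Z -> C) m :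
  conv n (fun j => (c * a j)%C) f m = (c * conv n a f m)%C.
Proof.
  unfold conv. rewrite <- sumZC_scal. f_equal.
  apply functional_extensionality. intros j. ring.
Qed.

Lemma conv_kernel_conj n (u f : Z -> C) m :
  conv n (fun j => Cconj (u j)) f m = Cconj (conv n u (fun x => Cconj (f x)) m).
Proof.
  unfold conv. rewrite <- sumZC_conj. f_equal.
  apply functional_extensionality. intros j. rewrite Cmult_conj, Cconj_conj. reflexivity.
Qed.

Lemma conv_kernel_opp_index n (u f : Z -> C) m :
  conv n (fun j => u (- j)%Z) f m = conv n u (fun x => f (- x)%Z) (- m)%Z.
Proof.
  unfold conv. rewrite <- (sumZC_opp_index n (fun j => (u j * f (- (- m - j))%Z)%C)).
  f_equal. apply functional_extensionality. intros j.
  f_equal. f_equal. lia.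
Qed.

Lemma nabla_iter_S k (g : Z -> C) : nabla_iter (S k) g = nabla (nabla_iter k g).
Proof. reflexivity. Qed.

Lemma nabla_iter_additive k (phi : C -> C) (g : Z -> C) :
  (forall a b, phi (a - b)%C = (phi a - phi b)%C) ->
  nabla_iter k (fun x => phi (g x)) = fun x => phi (nabla_iter k g x).
Proof.
  intros Hphi. induction k as [|k IH]; [reflexivity|].
  rewrite !nabla_iter_S, IH.
  unfold nabla. apply functional_extensionality. intros x. symmetry. apply Hphi.
Qed.

Lemma nabla_iter_plus k (g h : Z -> C) :
  nabla_iter k (fun x => (g x + h x)%C) =
  fun x => (nabla_iter k g x + nabla_iter k h x)%C.
Proof.
  induction k as [|k IH]; [reflexivity|].
  rewrite !nabla_iter_S, IH.
  unfold nabla. apply functional_extensionality. intros x. ring.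
Qed.

Lemma nabla_iter_opp_index k (g : Z -> C) :
  nabla_iter k (fun x => g (- x)%Z) =
  fun x => (RtoC ((-1) ^ k) * nabla_iter k g (- x - Z.of_nat k)%Z)%C.
Proof.
  induction k as [|k IH].
  - apply functional_extensionality. intros x. rewrite Z.sub_0_r. simpl. ring.
  - rewrite !nabla_iter_S, IH.
    unfold nabla. apply functional_extensionality. intros x.
    replace (- (x + 1) - Z.of_nat k)%Z with (- x - Z.of_nat (S k))%Z by lia.
    replace (- x - Z.of_nat (S k) + 1)%Z with (- x - Z.of_nat k)%Z by lia.
    cbn [pow]. rewrite RtoC_mult. ring.
Qed.

Lemma ex_series_le_nonneg (a b : nat -> R) :
  (forall m, 0 <= a m <= b m) -> ex_series b -> ex_series a.
Proof.
  intros Hab Hb. apply (ex_series_le a b); [intros m|exact Hb].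
  change (norm (a m)) with (Rabs (a m)). rewrite Rabs_pos_eq; apply Hab.
Qed.

Lemma sq_terms_nonneg (g : Z -> C) m : 0 <= sq_terms g m.
Proof. unfold sq_terms. nra. Qed.

Lemma sq_terms_ext (g h : Z -> C) :
  (forall x, Cmod (h x) = Cmod (g x)) -> sq_terms h = sq_terms g.
Proof.
  intros H. apply functional_extensionality. intros m. unfold sq_terms. rewrite !H. reflexivity.
Qed.

Lemma sq_terms_reflect (g : Z -> C) : sq_terms (fun x => g (- x - 1)%Z) = sq_terms g.
Proof.
  apply functional_extensionality. intros m. unfold sq_terms.
  replace (- (- Z.of_nat m - 1) - 1)%Z with (Z.of_nat m) by lia. ring.
Qed.

(* [sq_terms] pairs [g m] with [g (-m-1)]; after a shift by one, [g 0] moves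
   from the first series to the second. *)
Lemma is_series_sq_terms_succ (g : Z -> C) L :
  is_series (sq_terms g) L -> is_series (sq_terms (fun x => g (x + 1)%Z)) L.
Proof.
  intros HL.
  set (a := fun m : nat => Cmod (g (Z.of_nat m)) ^ 2).
  set (b := fun m : nat => Cmod (g (- Z.of_nat m - 1)%Z) ^ 2).
  assert (Ha : ex_series a).
  { apply (ex_series_le_nonneg a (sq_terms g)); [|exists L; exact HL].
    intros m. unfold a, sq_terms. nra. }
  assert (Hb : ex_series b).
  { apply (ex_series_le_nonneg b (sq_terms g)); [|exists L; exact HL].
    intros m. unfold b, sq_terms. nra. }
  destruct Ha as [A HA], Hb as [B HB]. change R in A, B.
  assert (HAB : L = A + B).
  { rewrite <- (is_series_unique _ _ HL). apply is_series_unique, (is_series_plus _ _ _ _ HA HB). }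
  set (b' := fun m : nat => match m with O => a O | S p => b p end).
  assert (Ha' : is_series (fun m => a (S m)) (A - a O)).
  { apply is_series_incr_1. unfold plus; simpl. replace (A - a O + a O) with A by ring. exact HA. }
  assert (Hb' : is_series b' (B + a O)).
  { apply is_series_decr_1. unfold plus, opp; simpl. replace (B + a O + - a O) with B by ring.
    exact HB. }
  replace L with (plus (A - a O) (B + a O)) by (unfold plus; simpl; lra).
  refine (is_series_ext _ _ _ _ (is_series_plus _ _ _ _ Ha' Hb')).
  intros [|p]; unfold plus, sq_terms, b', b, a; cbn -[Z.of_nat Z.add Z.sub Z.opp Cmod pow];
    f_equal; do 3 f_equal; lia.
Qed.

Lemma is_series_sq_terms_succ_iff (g : Z -> C) L :
  is_series (sq_terms g) L <-> is_series (sq_terms (fun x => g (x + 1)%Z)) L.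
Proof.
  split; [apply is_series_sq_terms_succ|]. intros H.
  rewrite <- (sq_terms_reflect (fun x => g (x + 1)%Z)) in H.
  apply is_series_sq_terms_succ in H.
  rewrite <- sq_terms_reflect.
  replace (fun x => g (- x - 1)%Z) with (fun x => g (- (x + 1) - 1 + 1)%Z); [exact H|].
  apply functional_extensionality. intros x. f_equal. lia.
Qed.

Lemma is_series_sq_terms_shift (z : Z) (g : Z -> C) L :
  is_series (sq_terms g) L <-> is_series (sq_terms (fun x => g (x + z)%Z)) L.
Proof.
  assert (Hnat : forall (m : nat) (h : Z -> C),
    is_series (sq_terms h) L <-> is_series (sq_terms (fun x => h (x + Z.of_nat m)%Z)) L).
  { induction m as [|m IH]; intros h.
    - replace (fun x => h (x + Z.of_nat 0)%Z) with h; [tauto|].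
      apply functional_extensionality. intros x. f_equal. lia.
    - rewrite (IH h), is_series_sq_terms_succ_iff.
      replace (fun x => h (x + 1 + Z.of_nat m)%Z) with (fun x => h (x + Z.of_nat (S m))%Z);
        [tauto|].
      apply functional_extensionality. intros x. f_equal. lia. }
  destruct (Z_le_gt_dec 0 z) as [Hz|Hz].
  - replace z with (Z.of_nat (Z.to_nat z)) by lia. apply Hnat.
  - rewrite (Hnat (Z.to_nat (- z)) (fun x => g (x + z)%Z)).
    replace (fun x => g (x + Z.of_nat (Z.to_nat (- z)) + z)%Z) with g; [tauto|].
    apply functional_extensionality. intros x. f_equal. lia.
Qed.

Lemma is_series_sq_terms_reflect (a : Z) (g : Z -> C) L :
  is_series (sq_terms g) L <-> is_series (sq_terms (fun x => g (- x + a)%Z)) L.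
Proof.
  rewrite <- (sq_terms_reflect g), (is_series_sq_terms_shift (- a - 1)).
  replace (fun x => g (- (x + (- a - 1)) - 1)%Z) with (fun x => g (- x + a)%Z); [tauto|].
  apply functional_extensionality. intros x. f_equal. lia.
Qed.

Lemma l2_normsq_eq_of_is_series (g h : Z -> C) :
  (forall L, is_series (sq_terms g) L -> is_series (sq_terms h) L) ->
  in_l2 g -> in_l2 h /\ l2_normsq h = l2_normsq g.
Proof.
  intros H [L HL]. split; [exists L; exact (H L HL)|].
  unfold l2_normsq. rewrite (is_series_unique _ _ (H L HL)), (is_series_unique _ _ HL).
  reflexivity.
Qed.

Lemma in_l2_shift (z : Z) (g : Z -> C) : in_l2 g -> in_l2 (fun x => g (x + z)%Z).
Proof.
  intros H. apply (l2_normsq_eq_of_is_series g); [|exact H].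
  intros L. apply is_series_sq_terms_shift.
Qed.

Lemma l2_reflect (a : Z) (g : Z -> C) : in_l2 g ->
  in_l2 (fun x => g (- x + a)%Z) /\ l2_normsq (fun x => g (- x + a)%Z) = l2_normsq g.
Proof.
  apply l2_normsq_eq_of_is_series. intros L. apply is_series_sq_terms_reflect.
Qed.

Lemma in_l2_of_sq_terms_le_geom (g : Z -> C) :
  (forall m, sq_terms g m <= (/ 2) ^ m) -> in_l2 g.
Proof.
  intros H. apply (ex_series_le_nonneg _ (fun m => (/ 2) ^ m)).
  - intros m. split; [apply sq_terms_nonneg | apply H].
  - apply ex_series_geom. rewrite Rabs_pos_eq; lra.
Qed.

Lemma in_l2_zero : in_l2 (fun _ => RtoC 0).
Proof.
  apply in_l2_of_sq_terms_le_geom. intros m. unfold sq_terms.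
  rewrite Cmod_0. pose proof (pow_le (/ 2) m). simpl. lra.
Qed.

Lemma in_l2_le_sum (h g1 g2 : Z -> C) :
  (forall x, Cmod (h x) <= Cmod (g1 x) + Cmod (g2 x)) ->
  in_l2 g1 -> in_l2 g2 -> in_l2 h.
Proof.
  intros H H1 H2.
  apply (ex_series_le_nonneg _ (fun m => 2 * sq_terms g1 m + 2 * sq_terms g2 m)).
  - intros m. split; [apply sq_terms_nonneg|]. unfold sq_terms.
    assert (K : forall x, Cmod (h x) ^ 2 <= 2 * Cmod (g1 x) ^ 2 + 2 * Cmod (g2 x) ^ 2).
    { intros x. specialize (H x).
      pose proof (Cmod_ge_0 (h x)). pose proof (Cmod_ge_0 (g1 x)). pose proof (Cmod_ge_0 (g2 x)).
      assert (Cmod (h x) * Cmod (h x) <= (Cmod (g1 x) + Cmod (g2 x)) * (Cmod (g1 x) + Cmod (g2 x)))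
        by (apply Rmult_le_compat; lra).
      pose proof (Rle_0_sqr (Cmod (g1 x) - Cmod (g2 x))). unfold Rsqr in *. simpl. lra. }
    pose proof (K (Z.of_nat m)). pose proof (K (- Z.of_nat m - 1)%Z). lra.
  - exact (ex_series_plus _ _ (ex_series_scal_l _ _ H1) (ex_series_scal_l _ _ H2)).
Qed.

Lemma in_l2_scal (c : C) (g : Z -> C) : in_l2 g -> in_l2 (fun x => (c * g x)%C).
Proof.
  intros H. apply (ex_series_le_nonneg _ (fun m => Cmod c ^ 2 * sq_terms g m)).
  - intros m. split; [apply sq_terms_nonneg|]. unfold sq_terms. rewrite !Cmod_mult. lra.
  - exact (ex_series_scal_l _ _ H).
Qed.

Lemma in_l2_conv n (u f : Z -> C) : in_l2 f -> in_l2 (conv n u f).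
Proof.
  intros Hf. unfold conv, sumZC. induction (zrange n) as [|a l IH]; cbn [fold_right].
  - exact in_l2_zero.
  - refine (in_l2_le_sum _ (fun m => (u a * f (m - a)%Z)%C) _ _ _ IH).
    + intros x. apply Cmod_triangle.
    + apply in_l2_scal, (in_l2_shift (- a) f Hf).
Qed.

Lemma in_l2_nabla_iter k (g : Z -> C) : in_l2 g -> in_l2 (nabla_iter k g).
Proof.
  intros Hg. induction k as [|k IH]; [exact Hg|].
  rewrite nabla_iter_S. unfold nabla.
  apply (in_l2_le_sum _ (fun m => nabla_iter k g (m + 1)%Z) (nabla_iter k g));
    [| apply in_l2_shift; exact IH | exact IH].
  intros x. unfold Cminus. rewrite <- (Cmod_opp (nabla_iter k g x)). apply Cmod_triangle.
Qed.

Lemma in_l2_op k n (u f : Z -> C) : in_l2 f -> in_l2 (nabla_iter k (conv n u f)).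
Proof. intros Hf. apply in_l2_nabla_iter, in_l2_conv, Hf. Qed.

Lemma Cmod_midpoint_sq (a b : C) :
  Cmod (RtoC (/ 2) * (a + b))%C ^ 2 <= (Cmod a ^ 2 + Cmod b ^ 2) / 2.
Proof.
  rewrite Cmod_mult, Cmod_R, Rabs_pos_eq by lra.
  pose proof (Cmod_triangle a b). pose proof (Cmod_ge_0 (a + b)%C).
  pose proof (Cmod_ge_0 a). pose proof (Cmod_ge_0 b).
  assert (Cmod (a + b)%C * Cmod (a + b)%C <= (Cmod a + Cmod b) * (Cmod a + Cmod b))
    by (apply Rmult_le_compat; lra).
  pose proof (Rle_0_sqr (Cmod a - Cmod b)). unfold Rsqr in *. simpl. nra.
Qed.

Lemma l2_normsq_midpoint_le (A B : Z -> C) : in_l2 A -> in_l2 B ->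
  l2_normsq (fun x => (RtoC (/ 2) * (A x + B x))%C) <= (l2_normsq A + l2_normsq B) / 2.
Proof.
  intros HA HB. unfold l2_normsq.
  replace ((Series (sq_terms A) + Series (sq_terms B)) / 2)
    with (Series (fun m => / 2 * (sq_terms A m + sq_terms B m)))
    by (rewrite Series_scal_l, Series_plus by assumption; field).
  apply Series_le.
  - intros m. split; [apply sq_terms_nonneg|]. unfold sq_terms.
    pose proof (Cmod_midpoint_sq (A (Z.of_nat m)) (B (Z.of_nat m))).
    pose proof (Cmod_midpoint_sq (A (- Z.of_nat m - 1)%Z) (B (- Z.of_nat m - 1)%Z)).
    lra.
  - exact (ex_series_scal_l _ _ (ex_series_plus _ _ HA HB)).
Qed.

(* Also valid for [s = 0], since [x / 0 = 0]. *)
Lemma sqrt_div_le_of_le_mean (QA QB QV s M : R) : 0 <= s ->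
  sqrt QA / s <= M -> sqrt QB / s <= M -> QV <= (QA + QB) / 2 -> sqrt QV / s <= M.
Proof.
  intros Hs HA HB HV.
  destruct (Req_dec s 0) as [->|Hs0].
  { unfold Rdiv in *. rewrite Rinv_0, Rmult_0_r in *. exact HA. }
  rewrite Rle_div_l in * by lra.
  assert (HMs : 0 <= M * s) by (pose proof (sqrt_pos QA); lra).
  assert (Hsq : forall Q, sqrt Q <= M * s -> Q <= (M * s) ^ 2).
  { intros Q HQ. destruct (Rle_lt_dec Q 0) as [Hq|Hq]; [nra|].
    rewrite <- (pow2_sqrt Q) by lra. pose proof (sqrt_pos Q). nra. }
  rewrite <- (sqrt_pow2 (M * s)) by exact HMs.
  apply sqrt_le_1_alt. apply Hsq in HA, HB. lra.
Qed.

Definition op_bounded (k n : nat) (u : Z -> C) (M : R) : Prop :=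
  forall f, in_l2 f -> f <> (fun _ => RtoC 0) ->
    l2_norm (nabla_iter k (conv n u f)) / l2_norm f <= M.

Lemma op_bounded_transfer k n (u w : Z -> C) M :
  (forall f, in_l2 f -> f <> (fun _ => RtoC 0) ->
     exists g, in_l2 g /\ g <> (fun _ => RtoC 0) /\ l2_normsq g = l2_normsq f /\
       l2_normsq (nabla_iter k (conv n w f)) = l2_normsq (nabla_iter k (conv n u g))) ->
  op_bounded k n u M -> op_bounded k n w M.
Proof.
  intros Ht Hu f Hf Hf0. destruct (Ht f Hf Hf0) as (g & Hg & Hg0 & Eg & Ew).
  unfold l2_norm. rewrite Ew, <- Eg. exact (Hu g Hg Hg0).
Qed.

Lemma op_bounded_conj k n (u : Z -> C) M :
  op_bounded k n u M -> op_bounded k n (fun j => Cconj (u j)) M.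
Proof.
  apply op_bounded_transfer. intros f Hf Hf0.
  assert (E : sq_terms (fun x => Cconj (f x)) = sq_terms f)
    by (apply sq_terms_ext; intros; apply Cmod_conj).
  exists (fun x => Cconj (f x)). split; [|split; [|split]].
  - unfold in_l2. rewrite E. exact Hf.
  - intros H0. apply Hf0, functional_extensionality. intros x.
    rewrite <- (Cconj_conj (f x)). apply (f_equal (fun g => Cconj (g x))) in H0.
    rewrite H0. apply injective_projections; simpl; ring.
  - unfold l2_normsq. rewrite E. reflexivity.
  - replace (conv n (fun j => Cconj (u j)) f)
      with (fun m => Cconj (conv n u (fun x => Cconj (f x)) m))
      by (apply functional_extensionality; intros m; symmetry; apply conv_kernel_conj).
    rewrite (nabla_iter_additive k Cconj) by apply Cminus_conj.
    unfold l2_normsq. f_equal. apply sq_terms_ext. intros. apply Cmod_conj.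
Qed.

Lemma op_bounded_opp_index k n (u : Z -> C) M :
  op_bounded k n u M -> op_bounded k n (fun j => u (- j)%Z) M.
Proof.
  apply op_bounded_transfer. intros f Hf Hf0.
  set (rf := fun x => f (- x)%Z).
  assert (Erf : rf = fun x => f (- x + 0)%Z)
    by (apply functional_extensionality; intros x; unfold rf; f_equal; lia).
  destruct (l2_reflect 0 f Hf) as [Hrf Nrf]. rewrite <- Erf in Hrf, Nrf.
  exists rf. split; [exact Hrf|split; [|split; [exact Nrf|]]].
  - intros H0. apply Hf0, functional_extensionality. intros x.
    apply (f_equal (fun g => g (- x)%Z)) in H0. unfold rf in H0.
    rewrite Z.opp_involutive in H0. exact H0.
  - replace (conv n (fun j => u (- j)%Z) f) with (fun m => conv n u rf (- m)%Z)
      by (apply functional_extensionality; intros m; symmetry; apply conv_kernel_opp_index).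
    rewrite nabla_iter_opp_index.
    destruct (l2_reflect (- Z.of_nat k) _ (in_l2_op k n u rf Hrf)) as [_ <-].
    unfold l2_normsq. f_equal. apply sq_terms_ext. intros x.
    rewrite Cmod_mult, Cmod_R, pow_1_abs, Rmult_1_l. reflexivity.
Qed.

Lemma op_bounded_midpoint k n (a b : Z -> C) M :
  op_bounded k n a M -> op_bounded k n b M ->
  op_bounded k n (fun j => (RtoC (/ 2) * (a j + b j))%C) M.
Proof.
  intros Ha Hb f Hf Hf0.
  replace (conv n (fun j => (RtoC (/ 2) * (a j + b j))%C) f)
    with (fun m => (RtoC (/ 2) * (conv n a f m + conv n b f m))%C)
    by (apply functional_extensionality; intros m;
        rewrite conv_kernel_scal, conv_kernel_plus; reflexivity).
  rewrite (nabla_iter_additive k (Cmult (RtoC (/ 2)))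
             (fun m => (conv n a f m + conv n b f m)%C)) by (intros; ring).
  rewrite nabla_iter_plus.
  apply (sqrt_div_le_of_le_mean _ _ _ _ _ (sqrt_pos _) (Ha f Hf Hf0) (Hb f Hf Hf0)).
  apply l2_normsq_midpoint_le; apply in_l2_op, Hf.
Qed.

Definition symmetric_real_part (u : Z -> C) (j : Z) : R := (Re (u j) + Re (u (- j)%Z)) / 2.

Lemma RtoC_symmetric_real_part (u : Z -> C) j :
  RtoC (symmetric_real_part u j) =
  (RtoC (/ 2) * (RtoC (/ 2) * (u j + Cconj (u j)) +
                 RtoC (/ 2) * (u (- j)%Z + Cconj (u (- j)%Z))))%C.
Proof.
  unfold symmetric_real_part. destruct (u j) as [a1 a2], (u (- j)%Z) as [b1 b2].
  apply injective_projections; simpl; field.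
Qed.

Lemma op_bounded_symmetric_real_part k n (u : Z -> C) M :
  op_bounded k n u M -> op_bounded k n (fun j => RtoC (symmetric_real_part u j)) M.
Proof.
  intros Hu. pose proof (op_bounded_opp_index k n u M Hu) as Hr.
  replace (fun j => RtoC (symmetric_real_part u j))
    with (fun j => (RtoC (/ 2) * (RtoC (/ 2) * (u j + Cconj (u j)) +
                                 RtoC (/ 2) * (u (- j)%Z + Cconj (u (- j)%Z))))%C)
    by (apply functional_extensionality; intros j; symmetry; apply RtoC_symmetric_real_part).
  apply op_bounded_midpoint; apply op_bounded_midpoint; auto using op_bounded_conj.
Qed.

Lemma symmetric_real_part_supported n (u : Z -> C) :
  supported_in (RtoC 0) n u -> supported_in 0 n (symmetric_real_part u).
Proof.
  intros Hu j Hj. unfold symmetric_real_part.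
  rewrite (Hu j Hj), (Hu (- j)%Z) by lia. simpl. lra.
Qed.

Lemma symmetric_real_part_even (u : Z -> C) j :
  symmetric_real_part u j = symmetric_real_part u (- j)%Z.
Proof. unfold symmetric_real_part. rewrite Z.opp_involutive. lra. Qed.

Lemma sumZR_symmetric_real_part n (u : Z -> C) :
  sumZR n (symmetric_real_part u) = Re (sumZC n u).
Proof.
  replace (symmetric_real_part u)
    with (fun j => Re (RtoC (/ 2) * (u j + u (- j)%Z))%C).
  2: { apply functional_extensionality. intros j. unfold symmetric_real_part.
       destruct (u j), (u (- j)%Z). simpl. field. }
  rewrite <- Re_sumZC, sumZC_scal, sumZC_plus, (sumZC_opp_index n u).
  destruct (sumZC n u). simpl. field.
Qed.

Lemma op_bounded_iff_opnorm_le k n (u : Z -> C) M :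
  op_bounded k n u M <-> Rbar_le (opnorm k n u) M.
Proof.
  split.
  - intros Hu. apply (proj2 (Lub_Rbar_correct _)). intros r (f & Hf & Hf0 & ->).
    exact (Hu f Hf Hf0).
  - intros HM f Hf Hf0.
    apply (Rbar_le_trans (Finite _) (opnorm k n u) (Finite M)); [|exact HM].
    apply (proj1 (Lub_Rbar_correct _)). exists f. auto.
Qed.

Lemma exists_nonzero_in_l2 : exists f : Z -> C, in_l2 f /\ f <> (fun _ => RtoC 0).
Proof.
  exists (fun x => if Z.eq_dec x 0 then RtoC 1 else RtoC 0). split.
  - apply in_l2_of_sq_terms_le_geom. intros m. unfold sq_terms.
    destruct (Z.eq_dec (- Z.of_nat m - 1) 0) as [e|_]; [lia|].
    pose proof (pow_le (/ 2) m).
    destruct (Z.eq_dec (Z.of_nat m) 0) as [e|_].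
    + replace m with 0%nat by lia. rewrite Cmod_1, Cmod_0. simpl. lra.
    + rewrite Cmod_0. simpl. lra.
  - intros E. apply (f_equal (fun g => g 0%Z)) in E. simpl in E.
    injection E. lra.
Qed.

Lemma opnorm_neq_m_infty k n (u : Z -> C) : opnorm k n u <> m_infty.
Proof.
  intros E. destruct exists_nonzero_in_l2 as (f & Hf & Hf0).
  assert (H : Rbar_le (l2_norm (nabla_iter k (conv n u f)) / l2_norm f) (opnorm k n u))
    by (apply (proj1 (Lub_Rbar_correct _)); exists f; auto).
  rewrite E in H. exact H.
Qed.

Lemma Cknl_le_opnorm k n (v : Z -> R) :
  supported_in 0 n v -> (forall j, v j = v (- j)%Z) -> sumZR n v = 1 ->
  Rbar_le (Cknl k n) (opnorm k n (fun j => RtoC (v j))).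
Proof.
  intros Hs Hev Hsum. destruct (opnorm k n (fun j => RtoC (v j))) as [r| |] eqn:E.
  - apply (proj1 (Glb_Rbar_correct _)). exists v. auto.
  - destruct (Cknl k n); exact I.
  - exfalso. exact (opnorm_neq_m_infty _ _ _ E).
Qed.

Theorem lemma5p1 (k n : nat) (hk : (0 < k)%nat) (hn : (0 < n)%nat)
  (u : Z -> C) (hu : supported_in (RtoC 0) n u) (hsum : sumZC n u = RtoC 1) :
  Rbar_le (Cknl k n) (opnorm k n u).
Proof.
  destruct (opnorm k n u) as [M| |] eqn:HM.
  - apply (Rbar_le_trans _ (opnorm k n (fun j => RtoC (symmetric_real_part u j)))).
    + apply Cknl_le_opnorm.
      * exact (symmetric_real_part_supported n u hu).
      * apply symmetric_real_part_even.
      * rewrite sumZR_symmetric_real_part, hsum. reflexivity.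
    + apply op_bounded_iff_opnorm_le, op_bounded_symmetric_real_part.
      apply op_bounded_iff_opnorm_le. rewrite HM. apply Rle_refl.
  - destruct (Cknl k n); exact I.
  - exfalso. exact (opnorm_neq_m_infty _ _ _ HM).
Qed.
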